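(* Let $L\ge1$, let $\gamma,\theta,\zeta,\mu_1,\dots,\mu_L$ be generic complex parameters, and consider the functions $M_\nu:\mathbb{C}^{L+1}\to\mathbb{C}$, $0\le\nu\le L$, $(\lambda_0,\boldsymbol\lambda)\mapsto M_\nu(\lambda_0;\boldsymbol\lambda)$ with $\boldsymbol\lambda=(\lambda_1,\dots,\lambda_L)$, defined in the context. Then: (1) $M_0(\lambda_0;\boldsymbol\lambda)$ is symmetric in $\lambda_1,\dots,\lambda_L$ and invariant under $\lambda_j\mapsto-\lambda_j-\gamma$ for each $1\le j\le L$; (2) for each $1\le i\le L$, $M_i(\lambda_0;\boldsymbol\lambda)$ is symmetric in the variables $\lambda_j$, $j\in\{1,\dots,L\}\setminus\{i\}$, and invariant under $\lambda_j\mapsto-\lambda_j-\gamma$ for each $j\in\{1,\dots,L\}\setminus\{i\}$; (3) for $1\le i,j\le L$, $M_i(\lambda_0;\boldsymbol\lambda)|_{\lambda_i\leftrightarrow\lambda_j}=M_j(\lambda_0;\boldsymbol\lambda)$, and \[ M_i(\lambda_0;\boldsymbol\lambda)\big|_{\lambda_i\mapsto-\lambda_i-\gamma}=-\frac{[2\lambda_i+2\gamma,\,\theta+\zeta+\lambda_i]}{[2\lambda_i,\,\theta+\zeta-\lambda_i-\gamma]}\,M_i(\lambda_0;\boldsymbol\lambda). \]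
   Context: Fix $\tau\in\mathbb{C}$ with $\operatorname{Im}\tau>0$, let $f(\lambda)=\sum_{n\ge0}(-1)^n e^{\mathrm{i}n(n+1)\pi\tau}\sinh((2n+1)\lambda)$, and write $[x]:=f(x)$, $[x_1,\dots,x_k]:=f(x_1)\cdots f(x_k)$. Define $\Lambda_{\mathcal A}(\lambda)=[\zeta+\lambda]\frac{[\theta+\zeta-\lambda]}{[\theta+\zeta+\lambda]}\prod_{j=1}^L[\lambda-\mu_j+\gamma,\lambda+\mu_j+\gamma]$, $\Lambda_{\tilde{\mathcal D}}(\lambda)=[\zeta-\lambda-\gamma]\frac{[2\lambda,\theta+\zeta+\lambda+\gamma,\theta-L\gamma]}{[2\lambda+\gamma,\theta+\zeta+\lambda,\theta-(L-1)\gamma]}\prod_{j=1}^L[\lambda-\mu_j,\lambda+\mu_j]$, $\bar\Lambda_{\mathcal A}(\lambda)=[\zeta-\lambda]\frac{[\gamma,\theta+(L-1)\gamma-2\lambda]}{[2\lambda+\gamma,\theta+(L-1)\gamma]}\prod_{j=1}^L[\lambda-\mu_j+\gamma,\lambda+\mu_j+\gamma]+[\zeta+\lambda+\gamma]\frac{[2\lambda,\theta+\zeta-\lambda-\gamma,\theta+L\gamma]}{[2\lambda+\gamma,\theta+\zeta+\lambda,\theta+(L-1)\gamma]}\prod_{j=1}^L[\lambda-\mu_j,\lambda+\mu_j]$. Then $M_0(\lambda_0;\boldsymbol\lambda)=\bar\Lambda_{\mathcal A}(\lambda_0)-\Lambda_{\mathcal A}(\lambda_0)\prod_{j=1}^L\frac{[\lambda_j-\lambda_0+\gamma,\lambda_j+\lambda_0]}{[\lambda_j-\lambda_0,\lambda_j+\lambda_0+\gamma]}$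 and, for $1\le i\le L$, $M_i(\lambda_0;\boldsymbol\lambda)=\frac{[2\lambda_i,\gamma,\theta+(L-1)\gamma+\lambda_i-\lambda_0]}{[2\lambda_i+\gamma,\lambda_i-\lambda_0,\theta+(L-1)\gamma]}\Lambda_{\mathcal A}(\lambda_i)\prod_{j\ne i}\frac{[\lambda_j-\lambda_i+\gamma,\lambda_j+\lambda_i]}{[\lambda_j-\lambda_i,\lambda_j+\lambda_i+\gamma]}+\frac{[\gamma,\theta+(L-2)\gamma-\lambda_i-\lambda_0,\theta-(L-1)\gamma]}{[\lambda_i+\lambda_0+\gamma,\theta+(L-1)\gamma,\theta-L\gamma]}\Lambda_{\tilde{\mathcal D}}(\lambda_i)\prod_{j\ne i}\frac{[\lambda_i-\lambda_j+\gamma,\lambda_i+\lambda_j+2\gamma]}{[\lambda_i-\lambda_j,\lambda_i+\lambda_j+\gamma]}$, products over $j\in\{1,\dots,L\}$. *)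

From Stdlib Require Import Reals.
From Coquelicot Require Import Coquelicot.
Open Scope C_scope.

Definition Cexp (z : C) : C :=
  (exp (Re z) * cos (Im z), exp (Re z) * sin (Im z))%R.

Definition Csinh (z : C) : C := (Cexp z - Cexp (- z)) / 2.

Definition fterm (tau x : C) (n : nat) : C :=
  (-1) ^ n * Cexp (Ci * PI * tau * INR (n * (n + 1)))
    * Csinh (INR (2 * n + 1) * x).

(* f(x) := the sum of the (convergent, since Im tau > 0) series. *)
Definition fth (tau x : C) : C :=
  @iota C_CompleteNormedModule (fun l : C => is_series (fterm tau x) l).

Fixpoint Cprod (n : nat) (F : nat -> C) : C :=
  match n with
  | O => 1
  | S m => Cprod m F * F (S m)
  end.

Definition Cprod_ne (n i : nat) (F : nat -> C) : C :=
  Cprod n (fun j => if Nat.eqb j i then 1 else F j).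

Definition LamA (tau gam th ze : C) (L : nat) (mu : nat -> C) (x : C) : C :=
  let f := fth tau in
  f (ze + x) * f (th + ze - x) / f (th + ze + x)
  * Cprod L (fun j => f (x - mu j + gam) * f (x + mu j + gam)).

Definition LamDt (tau gam th ze : C) (L : nat) (mu : nat -> C) (x : C) : C :=
  let f := fth tau in
  f (ze - x - gam)
  * (f (2 * x) * f (th + ze + x + gam) * f (th - INR L * gam))
  / (f (2 * x + gam) * f (th + ze + x) * f (th - (INR L - 1) * gam))
  * Cprod L (fun j => f (x - mu j) * f (x + mu j)).

Definition LamAbar (tau gam th ze : C) (L : nat) (mu : nat -> C) (x : C) : C :=
  let f := fth tau in
  f (ze - x)
  * (f gam * f (th + (INR L - 1) * gam - 2 * x))
  / (f (2 * x + gam) * f (th + (INR L - 1) * gam))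
  * Cprod L (fun j => f (x - mu j + gam) * f (x + mu j + gam))
  + f (ze + x + gam)
  * (f (2 * x) * f (th + ze - x - gam) * f (th + INR L * gam))
  / (f (2 * x + gam) * f (th + ze + x) * f (th + (INR L - 1) * gam))
  * Cprod L (fun j => f (x - mu j) * f (x + mu j)).

(* M_nu(lam0; lam_1..lam_L), nu in {0..L}; lam j is lambda_j for 1 <= j <= L *)
Definition Mfun (tau gam th ze : C) (L : nat) (mu : nat -> C)
    (nu : nat) (lam0 : C) (lam : nat -> C) : C :=
  let f := fth tau in
  match nu with
  | O =>
      LamAbar tau gam th ze L mu lam0
      - LamA tau gam th ze L mu lam0
        * Cprod L (fun j => f (lam j - lam0 + gam) * f (lam j + lam0)
                             / (f (lam j - lam0) * f (lam j + lam0 + gam)))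
  | S _ =>
      let li := lam nu in
      (f (2 * li) * f gam * f (th + (INR L - 1) * gam + li - lam0))
      / (f (2 * li + gam) * f (li - lam0) * f (th + (INR L - 1) * gam))
      * LamA tau gam th ze L mu li
      * Cprod_ne L nu (fun j => f (lam j - li + gam) * f (lam j + li)
                                 / (f (lam j - li) * f (lam j + li + gam)))
      + (f gam * f (th + (INR L - 2) * gam - li - lam0) * f (th - (INR L - 1) * gam))
      / (f (li + lam0 + gam) * f (th + (INR L - 1) * gam) * f (th - INR L * gam))
      * LamDt tau gam th ze L mu li
      * Cprod_ne L nu (fun j => f (li - lam j + gam) * f (li + lam j + 2 * gam)
                                 / (f (li - lam j) * f (li + lam j + gam)))
  end.

Definition refl_at (gam : C) (j : nat) (lam : nat -> C) : nat -> C :=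
  fun k => if Nat.eqb k j then - lam k - gam else lam k.

Definition swap_at (i j : nat) (lam : nat -> C) : nat -> C :=
  fun k => if Nat.eqb k i then lam j else if Nat.eqb k j then lam i else lam k.

(* sigma restricts to a permutation of {1..L} (injective self-map of a finite set) *)
Definition perm_1L (L : nat) (sigma : nat -> nat) : Prop :=
  (forall j, (1 <= j <= L)%nat -> (1 <= sigma j <= L)%nat) /\
  (forall j k, (1 <= j <= L)%nat -> (1 <= k <= L)%nat -> sigma j = sigma k -> j = k).

(* Genericity: all theta-values that can occur in denominators (of M_nu and of
   their images under the transformations considered) are nonzero.
   Index 0 stands for lambda_0. *)
Definition generic (tau gam th ze : C) (L : nat) (lam0 : C) (lam : nat -> C) : Prop :=
  let f := fth tau in
  let l := fun a : nat => match a with O => lam0 | S _ => lam a end in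
  f (th + (INR L - 1) * gam) <> 0 /\
  f (th - (INR L - 1) * gam) <> 0 /\
  f (th - INR L * gam) <> 0 /\
  (forall a, (a <= L)%nat ->
     f (2 * l a) <> 0 /\ f (2 * l a + gam) <> 0 /\
     f (th + ze + l a) <> 0 /\ f (th + ze - l a - gam) <> 0) /\
  (forall a b, (a <= L)%nat -> (b <= L)%nat -> a <> b ->
     f (l a - l b) <> 0 /\ f (l a + l b + gam) <> 0).

(* Only the oddness of [x] enters: rewriting [x] at arguments of the form [-y]
   as [-[y]] makes the factors of the products and prefactors pair up.  Oddness holds term by term in the series,
   hence for its sum (and for the junk value of [iota] when the series
   diverges).  The symmetries
   in the lambda's are reindexings of finite products. *)
From Pilot Require Import Defs.
From Stdlib Require Import Reals List Permutation Lia Lra Classical FunctionalExtensionality.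
From Coquelicot Require Import Coquelicot.
Open Scope C_scope.

Lemma Cinv_0 : / (0 : C) = 0.
Proof. apply injective_projections; simpl; unfold Rdiv; ring. Qed.

(* Total versions: [Cinv 0 = 0] makes them hold without side conditions. *)
Lemma Cinv_mult_total (a b : C) : / (a * b) = / a * / b.
Proof.
  destruct (classic (a = 0)) as [->|Ha]; [rewrite Cmult_0_l, Cinv_0; ring|].
  destruct (classic (b = 0)) as [->|Hb]; [rewrite Cmult_0_r, Cinv_0; ring|].
  field; auto.
Qed.

Lemma Cinv_opp_total (a : C) : / (- a) = - / a.
Proof.
  destruct (classic (a = 0)) as [->|Ha]; [rewrite Copp_0, Cinv_0; ring|].
  field. exact Ha.
Qed.

Lemma Copp_involutive (z : C) : - - z = z.
Proof. ring. Qed.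

Lemma iota_empty (P : C -> Prop) :
  (forall l, ~ P l) -> @iota C_CompleteNormedModule P = (0 : C).
Proof.
  intros HP. unfold iota, lim; simpl. unfold C_complete_lim, R_complete_lim.
  assert (Hlub : forall E : R -> Prop, (forall x, E x) -> real (Lub_Rbar E) = 0%R).
  { intros E HE. destruct (Lub_Rbar_correct E) as [Hub _].
    destruct (Lub_Rbar E) as [r| |]; simpl; auto.
    specialize (Hub (r + 1)%R (HE _)). simpl in Hub. lra. }
  apply injective_projections; simpl; apply Hlub;
    intros y x Hx; exfalso; exact (HP _ Hx).
Qed.

Lemma is_series_C_unique (a : nat -> C) (l l' : C) :
  is_series a l -> is_series a l' -> l = l'.
Proof.
  apply (@filterlim_locally_unique nat C_AbsRing C_NormedModule eventually _ (sum_n a)).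
Qed.

Lemma iota_is_series_opp (a : nat -> C) :
  @iota C_CompleteNormedModule (is_series (fun n => - a n))
  = - @iota C_CompleteNormedModule (is_series a).
Proof.
  assert (Hopp : forall l, is_series (fun n => - a n) l <-> is_series a (- l)).
  { intros l; split; intros H; apply is_series_opp in H.
    - eapply is_series_ext; [|exact H]. intros n. exact (Copp_involutive _).
    - rewrite <- (Copp_involutive l). eapply is_series_ext; [|exact H]. reflexivity. }
  destruct (classic (exists l, is_series a l)) as [[l Hl]|Hdiv].
  - rewrite (iota_unique (is_series a) l);
      [| intros y Hy; eapply is_series_C_unique; eauto | exact Hl].
    apply iota_unique.
    + intros y Hy%Hopp. rewrite <- (Copp_involutive y).
      f_equal. eapply is_series_C_unique; eauto.
    + apply Hopp. rewrite Copp_involutive. exact Hl.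
  - rewrite !iota_empty; [exact (eq_sym Copp_0)| |].
    + intros l Hl. eauto.
    + intros l Hl%Hopp. eauto.
Qed.

Lemma Csinh_opp (y : C) : Csinh (- y) = - Csinh y.
Proof. unfold Csinh. rewrite Copp_involutive. unfold Cdiv. ring. Qed.

Lemma fth_odd (tau x : C) : fth tau (- x) = - fth tau x.
Proof.
  unfold fth. rewrite <- iota_is_series_opp.
  replace (fterm tau (- x)) with (fun n => - fterm tau x n); [reflexivity|].
  apply functional_extensionality. intros n. unfold fterm.
  replace (RtoC (INR (2 * n + 1)) * - x) with (- (RtoC (INR (2 * n + 1)) * x)) by ring.
  rewrite Csinh_opp. ring.
Qed.

Section OddFunction.

Variable f : C -> C.
Hypothesis f_odd : forall x, f (- x) = - f x.

Lemma odd_eq (a b : C) : a = - b -> f a = - f b.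
Proof. intros ->. apply f_odd. Qed.

Definition Afac (g a b : C) : C :=
  f (a - b + g) * f (a + b) / (f (a - b) * f (a + b + g)).

Definition Dfac (g a b : C) : C :=
  f (a - b + g) * f (a + b + 2 * g) / (f (a - b) * f (a + b + g)).

Lemma Afac_refl_l (g a b : C) : Afac g (- a - g) b = Afac g a b.
Proof.
  unfold Afac.
  rewrite (odd_eq ((- a - g) - b + g) (a + b)) by ring.
  rewrite (odd_eq ((- a - g) + b) (a - b + g)) by ring.
  rewrite (odd_eq ((- a - g) - b) (a + b + g)) by ring.
  rewrite (odd_eq ((- a - g) + b + g) (a - b)) by ring.
  unfold Cdiv. rewrite !Cinv_mult_total, !Cinv_opp_total. ring.
Qed.

Lemma Dfac_refl_r (g a b : C) : Dfac g a (- b - g) = Dfac g a b.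
Proof.
  unfold Dfac.
  replace (a - (- b - g) + g) with (a + b + 2 * g) by ring.
  replace (a + (- b - g) + 2 * g) with (a - b + g) by ring.
  replace (a - (- b - g)) with (a + b + g) by ring.
  replace (a + (- b - g) + g) with (a - b) by ring.
  unfold Cdiv. rewrite !Cinv_mult_total. ring.
Qed.

Lemma Afac_refl_r (g a b : C) : Afac g a (- b - g) = Dfac g b a.
Proof.
  unfold Afac, Dfac.
  replace (a - (- b - g) + g) with (b + a + 2 * g) by ring.
  rewrite (odd_eq (a + (- b - g)) (b - a + g)) by ring.
  replace (a - (- b - g)) with (b + a + g) by ring.
  rewrite (odd_eq (a + (- b - g) + g) (b - a)) by ring.
  unfold Cdiv. rewrite !Cinv_mult_total, !Cinv_opp_total. ring.
Qed.

Lemma Dfac_refl_l (g a b : C) : Dfac g (- a - g) b = Afac g b a.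
Proof.
  unfold Afac, Dfac.
  rewrite (odd_eq (- a - g - b + g) (b + a)) by ring.
  replace (- a - g + b + 2 * g) with (b - a + g) by ring.
  rewrite (odd_eq (- a - g - b) (b + a + g)) by ring.
  replace (- a - g + b + g) with (b - a) by ring.
  unfold Cdiv. rewrite !Cinv_mult_total, !Cinv_opp_total. ring.
Qed.

Lemma odd_pair_refl_shift (g x m : C) :
  f (- x - g - m + g) * f (- x - g + m + g) = f (x - m) * f (x + m).
Proof.
  rewrite (odd_eq (- x - g - m + g) (x + m)) by ring.
  rewrite (odd_eq (- x - g + m + g) (x - m)) by ring. ring.
Qed.

Lemma odd_pair_refl (g x m : C) :
  f (- x - g - m) * f (- x - g + m) = f (x - m + g) * f (x + m + g).
Proof.
  rewrite (odd_eq (- x - g - m) (x + m + g)) by ring.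
  rewrite (odd_eq (- x - g + m) (x - m + g)) by ring. ring.
Qed.

End OddFunction.

Lemma Cprod_ext (n : nat) (F G : nat -> C) :
  (forall j, (1 <= j <= n)%nat -> F j = G j) -> Cprod n F = Cprod n G.
Proof.
  induction n as [|n IH]; intros H; simpl; [reflexivity|].
  rewrite H by lia. f_equal. apply IH. intros j Hj. apply H. lia.
Qed.

Lemma Cprod_fold (n : nat) (F : nat -> C) :
  Cprod n F = fold_right Cmult 1 (map F (seq 1 n)).
Proof.
  induction n as [|n IH]; [reflexivity|].
  rewrite seq_S, map_app, fold_right_app. simpl. rewrite IH.
  generalize (map F (seq 1 n)). intros l. induction l as [|a l IHl]; simpl.
  - ring.
  - rewrite <- IHl. ring.
Qed.

Lemma fold_right_Cmult_perm (l l' : list C) :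
  Permutation l l' -> fold_right Cmult 1 l = fold_right Cmult 1 l'.
Proof. induction 1; simpl; try congruence. ring. Qed.

Lemma Cprod_perm (n : nat) (s : nat -> nat) (F : nat -> C) :
  perm_1L n s -> Cprod n (fun k => F (s k)) = Cprod n F.
Proof.
  intros [Hrange Hinj]. rewrite !Cprod_fold, <- map_map.
  apply fold_right_Cmult_perm, Permutation_map, Permutation_map_same_l.
  - apply FinFun.Injective_map_NoDup_in; [|apply seq_NoDup].
    intros x y Hx%in_seq Hy%in_seq. apply Hinj; lia.
  - intros y (x & <- & Hx%in_seq)%in_map_iff.
    apply in_seq. specialize (Hrange x ltac:(lia)). lia.
Qed.

Lemma Cprod_ne_ext (n i : nat) (F G : nat -> C) :
  (forall j, j <> i -> F j = G j) -> Cprod_ne n i F = Cprod_ne n i G.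
Proof.
  intros H. apply Cprod_ext. intros j _.
  destruct (Nat.eqb_spec j i); auto.
Qed.

Lemma Cprod_ne_perm (n i : nat) (s : nat -> nat) (F : nat -> C) :
  perm_1L n s -> (1 <= i <= n)%nat ->
  Cprod_ne n i (fun k => F (s k)) = Cprod_ne n (s i) F.
Proof.
  intros Hs Hi. unfold Cprod_ne.
  rewrite <- (Cprod_perm n s (fun m => if Nat.eqb m (s i) then 1 else F m)) by exact Hs.
  apply Cprod_ext. intros j Hj.
  destruct (Nat.eqb_spec j i) as [->|Hji]; [now rewrite Nat.eqb_refl|].
  destruct (Nat.eqb_spec (s j) (s i)) as [E|]; [|reflexivity].
  exfalso. apply Hji, (proj2 Hs); auto.
Qed.

Definition transp (i j k : nat) : nat :=
  if Nat.eqb k i then j else if Nat.eqb k j then i else k.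

Lemma transp_perm (n i j : nat) :
  (1 <= i <= n)%nat -> (1 <= j <= n)%nat -> perm_1L n (transp i j).
Proof.
  intros Hi Hj. unfold perm_1L, transp. split.
  - intros k Hk. destruct (Nat.eqb_spec k i); [lia|]. destruct (Nat.eqb_spec k j); lia.
  - intros a b Ha Hb.
    destruct (Nat.eqb_spec a i), (Nat.eqb_spec a j), (Nat.eqb_spec b i), (Nat.eqb_spec b j); lia.
Qed.

Lemma swap_at_transp (i j : nat) (lam : nat -> C) :
  swap_at i j lam = fun k => lam (transp i j k).
Proof.
  apply functional_extensionality. intros k. unfold swap_at, transp.
  destruct (Nat.eqb k i), (Nat.eqb k j); reflexivity.
Qed.

Lemma refl_at_eq (gam : C) (j : nat) (lam : nat -> C) :
  refl_at gam j lam j = - lam j - gam.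
Proof. unfold refl_at. now rewrite Nat.eqb_refl. Qed.

Lemma refl_at_neq (gam : C) (j k : nat) (lam : nat -> C) :
  k <> j -> refl_at gam j lam k = lam k.
Proof. intros Hkj. unfold refl_at. now destruct (Nat.eqb_spec k j). Qed.

Section Mfun.

Variables (tau gam th ze : C) (L : nat) (mu : nat -> C) (lam0 : C).

Local Notation f := (fth tau).
Local Notation LamA := (LamA tau gam th ze L mu).
Local Notation LamDt := (LamDt tau gam th ze L mu).
Local Notation M := (Mfun tau gam th ze L mu).

Definition Mterm_A (x : C) : C :=
  f (2 * x) * f gam * f (th + (INR L - 1) * gam + x - lam0)
  / (f (2 * x + gam) * f (x - lam0) * f (th + (INR L - 1) * gam)) * LamA x.

Definition Mterm_D (x : C) : C :=
  f gam * f (th + (INR L - 2) * gam - x - lam0) * f (th - (INR L - 1) * gam)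
  / (f (x + lam0 + gam) * f (th + (INR L - 1) * gam) * f (th - INR L * gam)) * LamDt x.

Lemma Mfun_0E (lam : nat -> C) :
  M 0 lam0 lam = LamAbar tau gam th ze L mu lam0
                 - LamA lam0 * Cprod L (fun j => Afac f gam (lam j) lam0).
Proof. reflexivity. Qed.

Lemma Mfun_SE (n : nat) (lam : nat -> C) :
  M (S n) lam0 lam =
    Mterm_A (lam (S n)) * Cprod_ne L (S n) (fun j => Afac f gam (lam j) (lam (S n)))
  + Mterm_D (lam (S n)) * Cprod_ne L (S n) (fun j => Dfac f gam (lam (S n)) (lam j)).
Proof. reflexivity. Qed.

Lemma Mfun_0_perm (lam : nat -> C) (s : nat -> nat) :
  perm_1L L s -> M 0 lam0 (fun k => lam (s k)) = M 0 lam0 lam.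
Proof.
  intros Hs. rewrite !Mfun_0E.
  now rewrite (Cprod_perm L s (fun j => Afac f gam (lam j) lam0)).
Qed.

Lemma Mfun_0_refl (lam : nat -> C) (j : nat) :
  M 0 lam0 (refl_at gam j lam) = M 0 lam0 lam.
Proof.
  rewrite !Mfun_0E. do 2 f_equal. apply Cprod_ext. intros k _.
  destruct (Nat.eqb_spec k j) as [->|Hkj].
  - rewrite refl_at_eq. apply Afac_refl_l, fth_odd.
  - now rewrite refl_at_neq.
Qed.

Lemma Mfun_perm (lam : nat -> C) (i : nat) (s : nat -> nat) :
  perm_1L L s -> (1 <= i <= L)%nat ->
  M i lam0 (fun k => lam (s k)) = M (s i) lam0 lam.
Proof.
  intros Hs Hi. pose proof (proj1 Hs i Hi) as Hsi.
  destruct i as [|n]; [lia|]. destruct (s (S n)) as [|m] eqn:Es; [lia|].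
  rewrite !Mfun_SE, Es.
  rewrite (Cprod_ne_perm L (S n) s (fun j => Afac f gam (lam j) (lam (S m)))) by auto.
  rewrite (Cprod_ne_perm L (S n) s (fun j => Dfac f gam (lam (S m)) (lam j))) by auto.
  now rewrite Es.
Qed.

Lemma Mfun_refl_other (lam : nat -> C) (i j : nat) :
  (1 <= i)%nat -> j <> i -> M i lam0 (refl_at gam j lam) = M i lam0 lam.
Proof.
  intros Hi Hji. destruct i as [|n]; [lia|].
  rewrite !Mfun_SE, refl_at_neq by auto.
  f_equal; f_equal; apply Cprod_ne_ext; intros k _;
    (destruct (Nat.eqb_spec k j) as [->|]; [rewrite refl_at_eq | now rewrite refl_at_neq]).
  - apply Afac_refl_l, fth_odd.
  - apply Dfac_refl_r.
Qed.

Definition refl_ratio (x : C) : C :=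
  f (2 * x + 2 * gam) * f (th + ze + x) / (f (2 * x) * f (th + ze - x - gam)).

Hypotheses (HthL1 : f (th + (INR L - 1) * gam) <> 0)
           (HthL1' : f (th - (INR L - 1) * gam) <> 0)
           (HthL : f (th - INR L * gam) <> 0).

Section Reflection.

Variable x : C.
Hypotheses (H2x : f (2 * x) <> 0) (H2xg : f (2 * x + gam) <> 0)
           (Hthzx : f (th + ze + x) <> 0) (Hthzxg : f (th + ze - x - gam) <> 0)
           (Hxl : f (x - lam0) <> 0) (Hxlg : f (x + lam0 + gam) <> 0).

Lemma Mterm_A_refl : Mterm_A (- x - gam) = - refl_ratio x * Mterm_D x.
Proof.
  unfold Mterm_A, Mterm_D, refl_ratio, Defs.LamA, Defs.LamDt. cbv zeta.
  rewrite (Cprod_ext L _ (fun j => f (x - mu j) * f (x + mu j)))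
    by (intros; apply odd_pair_refl_shift, fth_odd).
  rewrite (odd_eq _ (fth_odd tau) (2 * (- x - gam)) (2 * x + 2 * gam)) by ring.
  rewrite (odd_eq _ (fth_odd tau) (2 * (- x - gam) + gam) (2 * x + gam)) by ring.
  rewrite (odd_eq _ (fth_odd tau) (- x - gam - lam0) (x + lam0 + gam)) by ring.
  replace (th + (INR L - 1) * gam + (- x - gam) - lam0)
    with (th + (INR L - 2) * gam - x - lam0) by ring.
  replace (ze + (- x - gam)) with (ze - x - gam) by ring.
  replace (th + ze - (- x - gam)) with (th + ze + x + gam) by ring.
  replace (th + ze + (- x - gam)) with (th + ze - x - gam) by ring.
  field. repeat split; auto.
Qed.

Lemma Mterm_D_refl : Mterm_D (- x - gam) = - refl_ratio x * Mterm_A x.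
Proof.
  unfold Mterm_A, Mterm_D, refl_ratio, Defs.LamA, Defs.LamDt. cbv zeta.
  rewrite (Cprod_ext L _ (fun j => f (x - mu j + gam) * f (x + mu j + gam)))
    by (intros; apply odd_pair_refl, fth_odd).
  rewrite (odd_eq _ (fth_odd tau) (2 * (- x - gam)) (2 * x + 2 * gam)) by ring.
  rewrite (odd_eq _ (fth_odd tau) (2 * (- x - gam) + gam) (2 * x + gam)) by ring.
  rewrite (odd_eq _ (fth_odd tau) (- x - gam + lam0 + gam) (x - lam0)) by ring.
  replace (th + (INR L - 2) * gam - (- x - gam) - lam0)
    with (th + (INR L - 1) * gam + x - lam0) by ring.
  replace (ze - (- x - gam) - gam) with (ze + x) by ring.
  replace (th + ze + (- x - gam) + gam) with (th + ze - x) by ring.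
  replace (th + ze + (- x - gam)) with (th + ze - x - gam) by ring.
  field. repeat split; auto.
Qed.

End Reflection.

Lemma Mfun_refl_self (lam : nat -> C) (i : nat) :
  (1 <= i)%nat ->
  f (2 * lam i) <> 0 -> f (2 * lam i + gam) <> 0 ->
  f (th + ze + lam i) <> 0 -> f (th + ze - lam i - gam) <> 0 ->
  f (lam i - lam0) <> 0 -> f (lam i + lam0 + gam) <> 0 ->
  M i lam0 (refl_at gam i lam) = - refl_ratio (lam i) * M i lam0 lam.
Proof.
  intros Hi H2x H2xg Hthzx Hthzxg Hxl Hxlg. destruct i as [|n]; [lia|].
  rewrite !Mfun_SE, refl_at_eq, Mterm_A_refl, Mterm_D_refl by auto.
  set (x := lam (S n)).
  rewrite (Cprod_ne_ext L (S n) (fun j => Afac f gam (refl_at gam (S n) lam j) (- x - gam))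
                                (fun j => Dfac f gam x (lam j))).
  2: { intros k Hk. rewrite refl_at_neq by auto. apply Afac_refl_r, fth_odd. }
  rewrite (Cprod_ne_ext L (S n) (fun j => Dfac f gam (- x - gam) (refl_at gam (S n) lam j))
                                (fun j => Afac f gam (lam j) x)).
  2: { intros k Hk. rewrite refl_at_neq by auto. apply Dfac_refl_l, fth_odd. }
  ring.
Qed.

End Mfun.

Theorem lemma3p4 (tau gam th ze : C) (L : nat) (mu : nat -> C)
    (lam0 : C) (lam : nat -> C) :
  (1 <= L)%nat ->
  (0 < Im tau)%R ->
  generic tau gam th ze L lam0 lam ->
  let M := Mfun tau gam th ze L mu in
  (* (1) *)
  ((forall sigma, perm_1L L sigma ->
      M 0%nat lam0 (fun k => lam (sigma k)) = M 0%nat lam0 lam) /\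
   (forall j, (1 <= j <= L)%nat ->
      M 0%nat lam0 (refl_at gam j lam) = M 0%nat lam0 lam)) /\
  (* (2) *)
  (forall i, (1 <= i <= L)%nat ->
     (forall sigma, perm_1L L sigma -> sigma i = i ->
        M i lam0 (fun k => lam (sigma k)) = M i lam0 lam) /\
     (forall j, (1 <= j <= L)%nat -> j <> i ->
        M i lam0 (refl_at gam j lam) = M i lam0 lam)) /\
  (* (3) *)
  (forall i j, (1 <= i <= L)%nat -> (1 <= j <= L)%nat ->
     M i lam0 (swap_at i j lam) = M j lam0 lam) /\
  (forall i, (1 <= i <= L)%nat ->
     M i lam0 (refl_at gam i lam)
     = - (fth tau (2 * lam i + 2 * gam) * fth tau (th + ze + lam i))
         / (fth tau (2 * lam i) * fth tau (th + ze - lam i - gam))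
         * M i lam0 lam).
Proof.
  intros _ _ (HthL1 & HthL1' & HthL & Hpt & Hpair); cbv zeta.
  split; [split|split; [|split]].
  - intros s Hs. apply Mfun_0_perm, Hs.
  - intros j _. apply Mfun_0_refl.
  - intros i Hi. split.
    + intros s Hs Hsi. rewrite Mfun_perm, Hsi by auto. reflexivity.
    + intros j _ Hji. apply Mfun_refl_other; [lia | exact Hji].
  - intros i j Hi Hj. rewrite swap_at_transp, Mfun_perm by auto using transp_perm.
    unfold transp. now rewrite Nat.eqb_refl.
  - intros [|n] Hn; [lia|].
    destruct (Hpt (S n)) as (H2x & H2xg & Hthzx & Hthzxg); [lia|].
    destruct (Hpair (S n) 0%nat) as [Hxl Hxlg]; [lia..|].
    rewrite Mfun_refl_self by (assumption || lia). unfold refl_ratio, Cdiv. ring.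
Qed.
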